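(* Let $b_1 < b_2$ be real numbers and $h>0$, and let $\mathcal{B}\subset\mathbb{C}$ be the closed rectangle with vertices $b_1, b_2, \beta_1 = b_1 - \mathrm{i}h, \beta_2 = b_2 - \mathrm{i}h$ (so $\operatorname{Im}(b_j)=0$ and $\operatorname{Im}(\beta_j)=-h<0$). Fix $z\in\mathbb{C}$ and, for $p\in\mathbb{C}$, let $R_p(\lambda) = 1-(\lambda-z)p$. Then: (i) for every $p\in\mathbb{C}$, $\max_{\lambda\in\mathcal{B}}|R_p(\lambda)| = \max_{\lambda\in\{b_1,b_2,\beta_1,\beta_2\}}|R_p(\lambda)|$; consequently \[ \min_{p\in\mathbb{C}}\max_{\lambda\in\mathcal{B}}|R_p(\lambda)|=\min_{p\in\mathbb{C}}\max_{\lambda\in\{b_1, b_2, \beta_1, \beta_2\}}|R_p(\lambda)|. \] (ii) If moreover $\operatorname{Im}(z)\notin[-h, 0]$ and $z$ lies in the interior of the circumcircle of $\mathcal{B}$, define \[ (\alpha_1, \alpha_2) = \begin{cases} (b_1-z,\ b_2-z) & \text{if } \operatorname{Im}(z)>0,\\ (\beta_1-z,\ \beta_2-z) & \text{otherwise}.\end{cases} \] Then \[ \min_{p\in\mathbb{C}}\max_{\lambda\in\mathcal{B}}|R_p(\lambda)| = \frac{|\alpha_1 - \alpha_2|}{|\alpha_1|+|\alpha_2|}, \] and this minimum is attained at $p^\ast=\dfrac{|\alpha_1|/\alpha_1 + |\alpha_2|/\alpha_2}{|\alpha_1|+|\alpha_2|}$.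
   Context: This concerns the stationary Richardson iteration $y^{(m+1)} = y^{(m)} + p\,(f-(A-zI)y^{(m)})$ for a shifted system $(A-zI)y=f$ whose spectrum lies in $\mathcal{B}$; $R_p$ is its residual polynomial. *)

(* The complex plane is modelled by an arbitrary
   numClosedFieldType C (e.g. algC); real numbers are elements x with
   x \is Num.real. *)
From HB Require Import structures.
From mathcomp Require Import all_boot all_order all_algebra.
Set Implicit Arguments. Unset Strict Implicit. Unset Printing Implicit Defensive.
Import Order.TTheory GRing.Theory Num.Theory.
Local Open Scope ring_scope.

Section Defs.
Variable C : numClosedFieldType.

Definition Rp (z p l : C) : C := 1 - (l - z) * p.

Definition rect (b1 b2 h : C) : C -> bool :=
  fun l => (b1 <= 'Re l <= b2) && (- h <= 'Im l <= 0).

Definition verts (b1 b2 h : C) : C -> bool :=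
  fun l => l \in [:: b1; b2; b1 - 'i * h; b2 - 'i * h].

Definition is_max_on (A : C -> bool) (f : C -> C) (m : C) : Prop :=
  (exists2 l, A l & f l = m) /\ (forall l, A l -> f l <= m).

Definition is_minmax (A : C -> bool) (z v : C) : Prop :=
  (exists p, is_max_on A (fun l => `|Rp z p l|) v) /\
  (forall p m, is_max_on A (fun l => `|Rp z p l|) m -> v <= m).

End Defs.

From HB Require Import structures.
From mathcomp Require Import all_boot all_order all_algebra.
From mathcomp Require Import ring.
Set Implicit Arguments. Unset Strict Implicit. Unset Printing Implicit Defensive.
Import Order.TTheory GRing.Theory Num.Theory.
Local Open Scope ring_scope.

(* (i) R_p is affine in l, so at a point of the rectangle it is a bilinear,
   hence convex, combination of its values at the four vertices; the maximum of
   |R_p| over the rectangle is therefore its maximum over the vertices, and the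
   two min-max problems coincide.

   (ii) Let A1, A2 be the two vertices nearest to z, translated by -z (b1, b2
   when Im z > 0; b1 - ih, b2 - ih when Im z < -h), so that R_p takes the
   values 1 - A1 p, 1 - A2 p there.  For every p the identity
   A1 - A2 = A1 (1 - A2 p) - A2 (1 - A1 p) bounds max_j |1 - Aj p| below by
   v = |A1 - A2| / (|A1| + |A2|), and pstar = (|A1|/A1 + |A2|/A2) / (|A1| + |A2|)
   attains v at both points.  The other two vertices are the near ones shifted
   by 'i t (t = -h or t = h); in Cartesian coordinates the squared residual of
   pstar there is v^2 plus a correction whose sign is fixed by the circumcircle
   condition, so pstar stays below v on all four vertices, hence on the
   rectangle by (i). *)

Lemma norm_convex_comb4 (R : numDomainType) (w1 w2 w3 w4 r1 r2 r3 r4 m : R) :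
  0 <= w1 -> 0 <= w2 -> 0 <= w3 -> 0 <= w4 -> w1 + w2 + w3 + w4 = 1 ->
  `|r1| <= m -> `|r2| <= m -> `|r3| <= m -> `|r4| <= m ->
  `|w1 * r1 + w2 * r2 + w3 * r3 + w4 * r4| <= m.
Proof.
move=> w1_ge0 w2_ge0 w3_ge0 w4_ge0 sum_w r1m r2m r3m r4m.
have -> : m = w1 * m + w2 * m + w3 * m + w4 * m by rewrite -!mulrDl sum_w mul1r.
apply: le_trans (ler_normD _ _) _; apply: lerD; last first.
  by rewrite normrM ger0_norm // ler_wpM2l.
apply: le_trans (ler_normD _ _) _; apply: lerD; last first.
  by rewrite normrM ger0_norm // ler_wpM2l.
apply: le_trans (ler_normD _ _) _.
by apply: lerD; rewrite normrM ger0_norm // ler_wpM2l.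
Qed.

Lemma seq_argmax (R : numDomainType) (T : eqType) (f : T -> R) (s : seq T) :
  (forall x, f x \is Num.real) -> s != [::] ->
  exists2 k, k \in s & forall j, j \in s -> f j <= f k.
Proof.
move=> f_real; elim: s => [//|x [|y s] IH] _.
  by exists x => [|j]; rewrite ?inE ?eqxx // => /eqP ->.
have [k k_in k_max] := IH isT.
have [fxk | fkx] := real_leP (f_real x) (f_real k).
- exists k => [|j]; first by rewrite inE k_in orbT.
  by rewrite inE => /orP [/eqP -> //|]; exact: k_max.
- exists x => [|j]; first by rewrite inE eqxx.
  by rewrite inE => /orP [/eqP -> //|/k_max jk]; exact: le_trans jk (ltW fkx).
Qed.

Section Rectangle.
Variables (C : numClosedFieldType) (b1 b2 h : C).
Hypotheses (b1_real : b1 \is Num.real) (b2_real : b2 \is Num.real).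
Hypotheses (h_real : h \is Num.real) (lt_b12 : b1 < b2) (h_gt0 : 0 < h).

Lemma verts_rect l : verts b1 b2 h l -> rect b1 b2 h l.
Proof.
have [le_b12 h_ge0] := (ltW lt_b12, ltW h_gt0).
rewrite /verts !inE => /or4P [] /eqP ->; rewrite /rect.
- by rewrite (Creal_ReP _ b1_real) (Creal_ImP _ b1_real) !lexx le_b12 oppr_le0 h_ge0.
- by rewrite (Creal_ReP _ b2_real) (Creal_ImP _ b2_real) !lexx le_b12 oppr_le0 h_ge0.
- by rewrite -mulrN Re_rect ?Im_rect ?rpredN // !lexx le_b12 oppr_le0 h_ge0.
- by rewrite -mulrN Re_rect ?Im_rect ?rpredN // !lexx le_b12 oppr_le0 h_ge0.
Qed.

(* Since R_p is affine, R_p at a point of the rectangle is a convex (bilinear)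
   combination of its values at the four vertices; hence a bound on the
   vertices is a bound on the whole rectangle. *)
Lemma rect_residual_bound (z p m : C) :
  (forall l, verts b1 b2 h l -> `|Rp z p l| <= m) ->
  forall l, rect b1 b2 h l -> `|Rp z p l| <= m.
Proof.
move=> vert_bound l /andP [/andP [L1 L2] /andP [I1 I2]].
set L := 'Re l in L1 L2; set I := 'Im l in I1 I2.
set s := (L - b1) / (b2 - b1); set u := - I / h.
have width_gt0 : 0 < b2 - b1 by rewrite subr_gt0.
have s_ge0 : 0 <= s by rewrite divr_ge0 ?subr_ge0 // ltW.
have s_le1 : 0 <= 1 - s by rewrite subr_ge0 ler_pdivrMr // mul1r lerD2r.
have u_ge0 : 0 <= u by rewrite divr_ge0 ?oppr_ge0 // ltW.
have u_le1 : 0 <= 1 - u by rewrite subr_ge0 ler_pdivrMr // mul1r lerNl.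
have -> : Rp z p l = ((1 - s) * (1 - u)) * Rp z p b1 + (s * (1 - u)) * Rp z p b2
   + ((1 - s) * u) * Rp z p (b1 - 'i * h) + (s * u) * Rp z p (b2 - 'i * h).
  rewrite /Rp [l]Crect /s /u; field.
  by rewrite !gt_eqF.
apply: norm_convex_comb4; try exact: mulr_ge0; first ring.
all: by apply: vert_bound; rewrite /verts !inE eqxx ?orbT.
Qed.

Lemma max_on_rect_iff_verts (z p m : C) :
  is_max_on (rect b1 b2 h) (fun l => `|Rp z p l|) m <->
  is_max_on (verts b1 b2 h) (fun l => `|Rp z p l|) m.
Proof.
split=> [[[l0 l0_rect <-] bound] | [[l0 l0_vert <-] bound]].
- have [k k_vert k_max] := @seq_argmax C C (fun l => `|Rp z p l|)
    [:: b1; b2; b1 - 'i * h; b2 - 'i * h] (fun l => normr_real _) isT.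
  have max_at_k : `|Rp z p l0| = `|Rp z p k|.
    apply/eqP; rewrite eq_le bound ?verts_rect // andbT.
    exact: rect_residual_bound k_max _ l0_rect.
  split=> [|l /verts_rect /bound]; first by exists k.
  by rewrite max_at_k.
- split=> [|l]; first by exists l0 => //; apply: verts_rect.
  exact: rect_residual_bound.
Qed.

End Rectangle.

Lemma is_minmax_congr (C : numClosedFieldType) (A B : C -> bool) (z : C) :
  (forall p m, is_max_on A (fun l => `|Rp z p l|) m <->
               is_max_on B (fun l => `|Rp z p l|) m) ->
  forall v, is_minmax A z v <-> is_minmax B z v.
Proof.
move=> same_max v.
by split=> [[[p /same_max opt] low] | [[p /same_max opt] low]];
  split=> [|q m /same_max]; by [exists p | apply: low].
Qed.

Lemma pstar_residual_norm (F : numFieldType) (A1 A2 : F) : A1 != 0 -> A2 != 0 ->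
  `|1 - A1 * ((`|A1| / A1 + `|A2| / A2) / (`|A1| + `|A2|))| =
  `|A1 - A2| / (`|A1| + `|A2|).
Proof.
move=> A1_neq0 A2_neq0; have S_gt0 : 0 < `|A1| + `|A2| by rewrite addr_gt0 ?normr_gt0.
have -> : 1 - A1 * ((`|A1| / A1 + `|A2| / A2) / (`|A1| + `|A2|))
        = `|A2| * (A2 - A1) / (A2 * (`|A1| + `|A2|)).
  by field; rewrite A1_neq0 A2_neq0 gt_eqF.
rewrite normrM normfV !normrM !normr_id (ger0_norm (ltW S_gt0)) distrC.
by field; rewrite normr_eq0 A2_neq0 gt_eqF.
Qed.

Lemma pstar_equioscillation (F : numFieldType) (A1 A2 : F) :
  A1 != 0 -> A2 != 0 ->
  let v := `|A1 - A2| / (`|A1| + `|A2|) in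
  let p := (`|A1| / A1 + `|A2| / A2) / (`|A1| + `|A2|) in
  `|1 - A1 * p| = v /\ `|1 - A2 * p| = v.
Proof.
move=> A1_neq0 A2_neq0 v p; split; first exact: pstar_residual_norm.
have := pstar_residual_norm A2_neq0 A1_neq0.
by rewrite [`|A2 - A1|]distrC [`|A2| + _]addrC [_ / A2 + _]addrC.
Qed.

(* Lower bound: no parameter p does better than this value on {A1, A2},
   because A1 - A2 = A1 (1 - A2 p) - A2 (1 - A1 p). *)
Lemma two_point_lower_bound (F : numFieldType) (A1 A2 p m : F) : A1 != 0 ->
  `|1 - A1 * p| <= m -> `|1 - A2 * p| <= m -> `|A1 - A2| / (`|A1| + `|A2|) <= m.
Proof.
move=> A1_neq0 bound1 bound2.
rewrite ler_pdivrMr ?ltr_wpDr ?normr_gt0 //.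
have -> : A1 - A2 = A1 * (1 - A2 * p) - A2 * (1 - A1 * p) by ring.
apply: le_trans (ler_normB _ _) _.
rewrite !normrM mulrDr [m * `|A1|]mulrC [m * `|A2|]mulrC.
by apply: lerD; apply: ler_wpM2l.
Qed.

Lemma circle_key_ineq (R : numDomainType) (K P y D h : R) :
  D \is Num.real -> 0 < K -> 0 < y -> 0 < h ->
  (K + P) * (K - P) = y ^+ 2 * D ^+ 2 -> P + y * h < 0 ->
  h * (K + P) <= y * D ^+ 2.
Proof.
move=> D_real K_gt0 y_gt0 h_gt0 diff_sq circ.
have yh_lt : y * h < K - P.
  rewrite -subr_gt0 (_ : K - P - y * h = K + - (P + y * h)); last by ring.
  by rewrite addr_gt0 // oppr_gt0.
have KP_gt0 : 0 < K - P by apply: lt_trans yh_lt; rewrite mulr_gt0.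
have yD_ge0 : 0 <= y * D ^+ 2 by rewrite mulr_ge0 ?real_exprn_even_ge0 ?ltW.
rewrite -(ler_pM2r KP_gt0) -mulrA diff_sq.
rewrite (_ : h * _ = y * D ^+ 2 * (y * h)); last by ring.
by rewrite ler_wpM2l // ltW.
Qed.

Lemma shift_sign (R : numDomainType) (K P Y D h t : R) :
  Y \is Num.real -> Y != 0 -> D \is Num.real -> 0 < K -> 0 < h ->
  (K + P) * (K - P) = Y ^+ 2 * D ^+ 2 -> P + `|Y| * h < 0 ->
  t = (if 0 < Y then - h else h) ->
  t * (Y * D ^+ 2 + t * (K + P)) <= 0.
Proof.
move=> Y_real Y_neq0 D_real K_gt0 h_gt0 diff_sq circ ->.
have key : h * (K + P) <= `|Y| * D ^+ 2.
  by apply: circle_key_ineq; rewrite ?normr_gt0 ?real_normK.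
have [Y_gt0 | Y_le0] := real_ltP (real0 R) Y_real.
- rewrite gtr0_norm // in key.
  rewrite mulNr oppr_le0 mulr_ge0 ?(ltW h_gt0) //.
  by rewrite mulNr subr_ge0.
- have Y_lt0 : Y < 0 by rewrite lt_neqAle Y_neq0.
  rewrite ltr0_norm // mulNr in key.
  rewrite mulr_ge0_le0 ?(ltW h_gt0) //.
  by rewrite addrC -lerBrDr sub0r.
Qed.

Section ResidualIdentity.
Variables (R : comPzRingType) (a1 a2 Y n1 n2 t : R).
Hypotheses (n1_sq : n1 ^+ 2 = a1 ^+ 2 + Y ^+ 2) (n2_sq : n2 ^+ 2 = a2 ^+ 2 + Y ^+ 2).

Let K := n1 * n2.
Let S := n1 + n2.
Let U := a1 * n2 + a2 * n1.
Let D := a2 - a1.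
Let P := a1 * a2 + Y ^+ 2.

(* Below n_j = |A_j|, A_j = a_j - iY, and pstar K S = U + i Y S; the unshifted
   residual (1 - A1 pstar) K S has squared modulus D^2 K^2. *)
Let unshifted_sq : (K * S - a1 * U - Y * (Y * S)) ^+ 2 + (a1 * (Y * S) - Y * U) ^+ 2
  = D ^+ 2 * K ^+ 2.
Proof.
have -> : K * S - a1 * U - Y * (Y * S)
  = n1 * a2 * D + n2 * (n1 ^+ 2 - (a1 ^+ 2 + Y ^+ 2)) + n1 * (n2 ^+ 2 - (a2 ^+ 2 + Y ^+ 2)).
  by rewrite /K /S /U /D; ring.
rewrite -n1_sq -n2_sq !subrr !mulr0 !addr0.
have -> : D ^+ 2 * K ^+ 2 = D ^+ 2 * n1 ^+ 2 * n2 ^+ 2 by rewrite /K; ring.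
by rewrite n2_sq /S /U /D; ring.
Qed.

Let pstar_sq : U ^+ 2 + (Y * S) ^+ 2 = 2 * K * (K + P).
Proof.
have -> : U ^+ 2 + (Y * S) ^+ 2 = 2 * K * (K + P)
  + n2 ^+ 2 * ((a1 ^+ 2 + Y ^+ 2) - n1 ^+ 2) + n1 ^+ 2 * ((a2 ^+ 2 + Y ^+ 2) - n2 ^+ 2).
  by rewrite /U /S /K /P; ring.
by rewrite -n1_sq -n2_sq !subrr !mulr0 !addr0.
Qed.

Let sum_sq : S ^+ 2 = D ^+ 2 + 2 * P + 2 * K.
Proof.
have -> : S ^+ 2 = n1 ^+ 2 + n2 ^+ 2 + 2 * K by rewrite /S /K; ring.
by rewrite n1_sq n2_sq /D /P; ring.
Qed.

(* The squared modulus of the vertically shifted residual, scaled by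
   (K S)^2, splits into the unshifted value D^2 K^2 and a correction. *)
Lemma shifted_residual_identity :
  (K * S - a1 * U + (t - Y) * (Y * S)) ^+ 2 + (a1 * (Y * S) + (t - Y) * U) ^+ 2
  = D ^+ 2 * K ^+ 2 + 2 * K * (t * (Y * D ^+ 2 + t * (K + P))).
Proof.
rewrite -unshifted_sq.
have -> : (K * S - a1 * U + (t - Y) * (Y * S)) ^+ 2 + (a1 * (Y * S) + (t - Y) * U) ^+ 2
  = (K * S - a1 * U - Y * (Y * S)) ^+ 2 + (a1 * (Y * S) - Y * U) ^+ 2
    + t * (2 * Y * K * S ^+ 2 - 2 * Y * (U ^+ 2 + (Y * S) ^+ 2)
           + t * (U ^+ 2 + (Y * S) ^+ 2)) by ring.
by rewrite pstar_sq sum_sq; ring.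
Qed.

End ResidualIdentity.

Lemma norm_div_conj (C : numClosedFieldType) (A : C) : A != 0 -> `|A| / A = A^* / `|A|.
Proof. by move=> A_neq0; rewrite invC_norm; field; rewrite normr_eq0. Qed.

Lemma mulC_rect (C : numClosedFieldType) (a b c d : C) :
  (a + 'i * b) * (c + 'i * d) = (a * c - b * d) + 'i * (a * d + b * c).
Proof.
have -> : (a + 'i * b) * (c + 'i * d)
  = (a * c - b * d) + 'i * (a * d + b * c) + ('i ^+ 2 + 1) * (b * d) by ring.
by rewrite sqrCi addNr mul0r addr0.
Qed.

Lemma rect_point_facts (C : numClosedFieldType) (a Y : C) :
  a \is Num.real -> Y \is Num.real -> Y != 0 ->
  [/\ `|a - 'i * Y| ^+ 2 = a ^+ 2 + Y ^+ 2, a - 'i * Y != 0 & (a - 'i * Y)^* = a + 'i * Y].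
Proof.
move=> a_real Y_real Y_neq0; have NY_real : - Y \is Num.real by rewrite rpredN.
rewrite -mulrN; split.
- by rewrite normC2_rect // sqrrN.
- apply: contra Y_neq0 => /eqP A_eq0.
  by rewrite -oppr_eq0 -(Im_rect a_real NY_real) A_eq0 raddf0.
- by rewrite conjC_rect // mulrN opprK.
Qed.

Section ShiftedBound.
Variables (C : numClosedFieldType) (a1 a2 Y h t : C).
Hypotheses (a1_real : a1 \is Num.real) (a2_real : a2 \is Num.real).
Hypotheses (Y_real : Y \is Num.real) (Y_neq0 : Y != 0) (h_gt0 : 0 < h).
Hypothesis circ : a1 * a2 + Y ^+ 2 + `|Y| * h < 0.
Hypothesis t_def : t = (if 0 < Y then - h else h).

Let A1 := a1 - 'i * Y.
Let A2 := a2 - 'i * Y.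
Let n1 : C := `|A1|.
Let n2 : C := `|A2|.
Let K : C := n1 * n2.
Let S : C := n1 + n2.
Let U : C := a1 * n2 + a2 * n1.

Let n_gt0 : 0 < n1 /\ 0 < n2.
Proof.
have [_ A1_neq0 _] := rect_point_facts a1_real Y_real Y_neq0.
have [_ A2_neq0 _] := rect_point_facts a2_real Y_real Y_neq0.
by rewrite !normr_gt0.
Qed.

(* Cartesian form of the scaled shifted residual, using
   |Aj| / Aj = conj(Aj) / |Aj| = (aj + iY) / |Aj|. *)
Let shifted_residual_rect :
  (1 - (A1 + 'i * t) * ((n1 / A1 + n2 / A2) / S)) * (K * S)
  = (K * S - a1 * U + (t - Y) * (Y * S)) + 'i * - (a1 * (Y * S) + (t - Y) * U).
Proof.
have [_ A1_neq0 A1_conj] := rect_point_facts a1_real Y_real Y_neq0.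
have [_ A2_neq0 A2_conj] := rect_point_facts a2_real Y_real Y_neq0.
have [n1_gt0 n2_gt0] := n_gt0.
have pstar_scaled : (n1 / A1 + n2 / A2) / S * (K * S) = U + 'i * (Y * S).
  rewrite !norm_div_conj // A1_conj A2_conj -/n1 -/n2 /K /S /U.
  by field; rewrite !gt_eqF ?addr_gt0.
rewrite (_ : (1 - _ * _) * _
          = K * S - (a1 + 'i * (t - Y)) * ((n1 / A1 + n2 / A2) / S * (K * S))).
  by rewrite pstar_scaled mulC_rect; ring.
by rewrite /A1; ring.
Qed.

Lemma pstar_shifted_bound :
  `|1 - (A1 + 'i * t) * ((n1 / A1 + n2 / A2) / (n1 + n2))| <= `|A1 - A2| / (n1 + n2).
Proof.
have [n1_sq _ _] := rect_point_facts a1_real Y_real Y_neq0.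
have [n2_sq _ _] := rect_point_facts a2_real Y_real Y_neq0.
have [n1_gt0 n2_gt0] := n_gt0; have [n1_ge0 n2_ge0] := (ltW n1_gt0, ltW n2_gt0).
have S_gt0 : 0 < S by rewrite addr_gt0.
have KS_gt0 : 0 < K * S by rewrite !mulr_gt0.
have diff_norm : `|A1 - A2| = `|a2 - a1| by rewrite /A1 /A2 distrC; congr `|_|; ring.
rewrite -(ler_pM2r KS_gt0) -[K * S in X in X <= _](ger0_norm (ltW KS_gt0)).
rewrite -normrM shifted_residual_rect diff_norm.
rewrite (_ : _ / S * _ = `|a2 - a1| * K); last by field; rewrite gt_eqF.
rewrite -(ler_pXn2r (n := 2)) ?nnegrE ?normr_ge0 ?mulr_ge0 //.
have [n1_real n2_real] : n1 \is Num.real /\ n2 \is Num.real by rewrite !normr_real.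
have t_real : t \is Num.real by rewrite t_def; case: ifP; rewrite ?rpredN gtr0_real.
have [S_real K_real U_real] : [/\ S \is Num.real, K \is Num.real & U \is Num.real].
  by rewrite !(rpredD, rpredM).
rewrite normC2_rect ?(rpredN, rpredD, rpredB, rpredM) // [X in _ + X]sqrrN.
rewrite (_ : (`|a2 - a1| * K) ^+ 2 = (a2 - a1) ^+ 2 * K ^+ 2); last first.
  by rewrite exprMn real_normK ?rpredB.
rewrite shifted_residual_identity // gerDl mulr_ge0_le0 ?mulr_ge0 //.
apply: (shift_sign (h := h)) => //; rewrite ?rpredB ?mulr_gt0 //.
rewrite (_ : _ * _ = n1 ^+ 2 * n2 ^+ 2 - (a1 * a2 + Y ^+ 2) ^+ 2); last by ring.
by rewrite n1_sq n2_sq; ring.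
Qed.

End ShiftedBound.

Lemma pstar_vertex_bounds (C : numClosedFieldType) (a1 a2 Y h t A1 A2 : C) :
  a1 \is Num.real -> a2 \is Num.real -> Y \is Num.real -> Y != 0 -> 0 < h ->
  a1 * a2 + Y ^+ 2 + `|Y| * h < 0 -> t = (if 0 < Y then - h else h) ->
  A1 = a1 - 'i * Y -> A2 = a2 - 'i * Y ->
  let v := `|A1 - A2| / (`|A1| + `|A2|) in
  let p := (`|A1| / A1 + `|A2| / A2) / (`|A1| + `|A2|) in
  [/\ `|1 - A1 * p| = v, `|1 - A2 * p| = v,
      `|1 - (A1 + 'i * t) * p| <= v & `|1 - (A2 + 'i * t) * p| <= v].
Proof.
move=> a1_real a2_real Y_real Y_neq0 h_gt0 circ t_def -> -> v p.
have [_ A1_neq0 _] := rect_point_facts a1_real Y_real Y_neq0.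
have [_ A2_neq0 _] := rect_point_facts a2_real Y_real Y_neq0.
have [eq1 eq2] := pstar_equioscillation A1_neq0 A2_neq0.
split; [exact: eq1 | exact: eq2 | | ].
  exact: (pstar_shifted_bound a1_real a2_real Y_real Y_neq0 h_gt0 circ t_def).
rewrite mulrC in circ.
have := pstar_shifted_bound a2_real a1_real Y_real Y_neq0 h_gt0 circ t_def.
by rewrite [`|_ - (a1 - _)|]distrC [`|a2 - _| + _]addrC [_ / (a2 - _) + _]addrC.
Qed.

Lemma equioscillation_minmax (C : numClosedFieldType) (A : C -> bool) (z p c1 c2 : C) :
  A c1 -> A c2 -> c1 - z != 0 ->
  let v := `|(c1 - z) - (c2 - z)| / (`|c1 - z| + `|c2 - z|) in
  `|Rp z p c1| = v -> (forall l, A l -> `|Rp z p l| <= v) ->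
  is_minmax A z v /\ is_max_on A (fun l => `|Rp z p l|) v.
Proof.
move=> c1_in c2_in c1_neq v at_c1 bound.
have max_v : is_max_on A (fun l => `|Rp z p l|) v by split=> //; exists c1.
split=> //; split=> [|q m [_ q_bound]]; first by exists p.
exact: two_point_lower_bound c1_neq (q_bound _ c1_in) (q_bound _ c2_in).
Qed.

Lemma circumcircle_interior (C : numClosedFieldType) (b1 b2 h z : C) :
  b1 \is Num.real -> b2 \is Num.real -> h \is Num.real ->
  `|z - ((b1 + b2) / 2%:R - 'i * h / 2%:R)| < `|b1 - ((b1 + b2) / 2%:R - 'i * h / 2%:R)| ->
  (b1 - 'Re z) * (b2 - 'Re z) + 'Im z ^+ 2 + 'Im z * h < 0.
Proof.
move=> b1_real b2_real h_real.
set x := 'Re z; set y := 'Im z; set mid := (b1 + b2) / 2%:R; set h2 := h / 2%:R.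
have [x_real y_real] : x \is Num.real /\ y \is Num.real by rewrite Creal_Re Creal_Im.
have mid_real : mid \is Num.real by rewrite rpredM ?rpredD ?rpredV ?rpred_nat.
have h2_real : h2 \is Num.real by rewrite rpredM ?rpredV ?rpred_nat.
rewrite (_ : z - _ = (x - mid) + 'i * (y + h2)); last by rewrite [z]Crect /h2; ring.
rewrite (_ : b1 - _ = (b1 - mid) + 'i * h2); last by rewrite /h2; ring.
rewrite -(ltr_pXn2r (n := 2)) ?nnegrE ?normr_ge0 //.
rewrite !normC2_rect ?(rpredD, rpredB, rpredN) // -subr_lt0.
rewrite (_ : _ - _ = (b1 - x) * (b2 - x) + y ^+ 2 + y * h) //.
by rewrite /mid /h2; field.
Qed.

Lemma rect_minmax_from_shift (C : numClosedFieldType) (b1 b2 h z c Y t : C) :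
  b1 \is Num.real -> b2 \is Num.real -> h \is Num.real -> b1 < b2 -> 0 < h ->
  Y \is Num.real -> Y != 0 ->
  (b1 - 'Re z) * (b2 - 'Re z) + Y ^+ 2 + `|Y| * h < 0 ->
  t = (if 0 < Y then - h else h) ->
  z + c = 'Re z + 'i * Y ->
  verts b1 b2 h (b1 - c) -> verts b1 b2 h (b2 - c) ->
  (forall l, verts b1 b2 h l ->
     l \in [:: b1 - c; b2 - c; b1 - c + 'i * t; b2 - c + 'i * t]) ->
  let a1 := b1 - c - z in
  let a2 := b2 - c - z in
  let v := `|a1 - a2| / (`|a1| + `|a2|) in
  let pstar := (`|a1| / a1 + `|a2| / a2) / (`|a1| + `|a2|) in
  is_minmax (rect b1 b2 h) z v /\ is_max_on (rect b1 b2 h) (fun l => `|Rp z pstar l|) v.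
Proof.
move=> b1_real b2_real h_real lt_b12 h_gt0 Y_real Y_neq0 circ t_def shift near1 near2 far.
move=> a1 a2 v pstar.
have x_real := Creal_Re z.
have shifted b : b - c - z = b - 'Re z - 'i * Y by rewrite -[RHS]addrA -opprD -shift; ring.
have [b1x_real b2x_real] : b1 - 'Re z \is Num.real /\ b2 - 'Re z \is Num.real.
  by rewrite !rpredB.
have [at1 at2 shift1 shift2] := pstar_vertex_bounds b1x_real b2x_real Y_real Y_neq0 h_gt0
  circ t_def (shifted b1) (shifted b2).
have [_ a1_neq0 _] := rect_point_facts b1x_real Y_real Y_neq0.
apply: (equioscillation_minmax (c2 := b2 - c)).
- exact: verts_rect.
- exact: verts_rect.
- by rewrite shifted.
- exact: at1.
apply: rect_residual_bound => // l /far; rewrite !inE => /or4P [] /eqP -> ; rewrite /Rp.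
- by rewrite at1.
- by rewrite at2.
- by rewrite (_ : b1 - c + _ - z = a1 + 'i * t) //; rewrite /a1; ring.
- by rewrite (_ : b2 - c + _ - z = a2 + 'i * t) //; rewrite /a2; ring.
Qed.

Lemma pstar_optimal (C : numClosedFieldType) (b1 b2 h z c : C) :
  b1 \is Num.real -> b2 \is Num.real -> h \is Num.real -> b1 < b2 -> 0 < h ->
  (c = 0 /\ 0 < 'Im z) \/ (c = 'i * h /\ 'Im z < - h) ->
  (b1 - 'Re z) * (b2 - 'Re z) + 'Im z ^+ 2 + 'Im z * h < 0 ->
  let a1 := b1 - c - z in
  let a2 := b2 - c - z in
  let v := `|a1 - a2| / (`|a1| + `|a2|) in
  let pstar := (`|a1| / a1 + `|a2| / a2) / (`|a1| + `|a2|) in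
  is_minmax (rect b1 b2 h) z v /\ is_max_on (rect b1 b2 h) (fun l => `|Rp z pstar l|) v.
Proof.
move=> b1_real b2_real h_real lt_b12 h_gt0 [[-> Im_gt0] | [-> Im_lt]] circ.
- apply: (rect_minmax_from_shift (Y := 'Im z) (t := - h)); rewrite ?gtr0_norm ?Im_gt0 //.
  + by rewrite gt_eqF.
  + by rewrite addr0 -Crect.
  + by rewrite subr0 /verts !inE eqxx.
  + by rewrite subr0 /verts !inE eqxx ?orbT.
  + by move=> l; rewrite /verts !subr0 mulrN.
- have Y_lt0 : 'Im z + h < 0 by rewrite -ltrBrDr sub0r.
  apply: (rect_minmax_from_shift (Y := 'Im z + h) (t := h)); rewrite ?(lt_gtF Y_lt0) //.
  + by rewrite rpredD ?Creal_Im.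
  + by rewrite lt_eqF.
  + by rewrite ltr0_norm //; move: circ; congr (_ < _); ring.
  + by rewrite {1}[z]Crect; ring.
  + by rewrite /verts !inE eqxx ?orbT.
  + by rewrite /verts !inE eqxx ?orbT.
  + by move=> l; rewrite /verts !inE !subrK => /or4P [] /eqP ->; rewrite eqxx ?orbT.
Qed.

Theorem theorem4p1 (C : numClosedFieldType) (b1 b2 h z : C) :
  b1 \is Num.real -> b2 \is Num.real -> h \is Num.real ->
  b1 < b2 -> 0 < h ->
  (* (i) *)
  ((forall p m, is_max_on (rect b1 b2 h) (fun l => `|Rp z p l|) m <->
                is_max_on (verts b1 b2 h) (fun l => `|Rp z p l|) m) /\
   (forall v, is_minmax (rect b1 b2 h) z v <-> is_minmax (verts b1 b2 h) z v)) /\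
  (* (ii) *)
  (~~ (- h <= 'Im z <= 0) ->
   `|z - ((b1 + b2) / 2%:R - 'i * h / 2%:R)| < `|b1 - ((b1 + b2) / 2%:R - 'i * h / 2%:R)| ->
   let a1 := if 0 < 'Im z then b1 - z else b1 - 'i * h - z in
   let a2 := if 0 < 'Im z then b2 - z else b2 - 'i * h - z in
   let v := `|a1 - a2| / (`|a1| + `|a2|) in
   let pstar := (`|a1| / a1 + `|a2| / a2) / (`|a1| + `|a2|) in
   is_minmax (rect b1 b2 h) z v /\
   is_max_on (rect b1 b2 h) (fun l => `|Rp z pstar l|) v).
Proof.
move=> b1_real b2_real h_real lt_b12 h_gt0.
have max_iff := max_on_rect_iff_verts b1_real b2_real h_real lt_b12 h_gt0 z.
split; first by split=> //; apply: is_minmax_congr.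
move=> Im_out /(circumcircle_interior b1_real b2_real h_real) circ.
have [Im_gt0 | Im_le0] := boolP (0 < 'Im z).
- have := pstar_optimal b1_real b2_real h_real lt_b12 h_gt0 (or_introl (conj erefl Im_gt0)) circ.
  by rewrite !subr0.
- have Im_npos : 'Im z <= 0 by rewrite real_leNgt ?Creal_Im.
  have Im_lt : 'Im z < - h.
    by move: Im_out; rewrite Im_npos andbT -real_ltNge ?rpredN ?Creal_Im.
  exact: pstar_optimal b1_real b2_real h_real lt_b12 h_gt0 (or_intror (conj erefl Im_lt)) circ.
Qed.
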